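(* Let $X,Y,Z\in\mathbb{Z}[i]$ satisfy $X^2+iY^2=Z^2$, $\gcd(X,Y)\in U$, $XYZ\neq0$, with $X,Z\in O^I$ and $Y=(1+i)^2W$, $W\in G$. Then there exist an integer $t$, $0\le t\le3$, and $P,Q\in G$ with $\gcd(P,Q)=1$ such that $$X=i^{t+1}\big(P^2-(-1)^t iQ^2\big),\quad Y=(1+i)^2PQ,\quad Z=i^{t+1}\big(P^2+(-1)^t iQ^2\big).$$
   Context: $\mathbb{Z}[i]$ is the ring of Gaussian integers, $U=\{1,-1,i,-i\}$ its unit group; $R(\alpha),I(\alpha)$ are real and imaginary parts. $\gcd(x,y)\in U$ means no common non-unit divisor; for $P,Q\in G$, $\gcd(P,Q)=1$ means no common prime factor. $O=\{\alpha: R(\alpha)+I(\alpha)\equiv1\pmod 2\}$, $O^I=\{\alpha\in O: R(\alpha)\equiv 1\pmod 4\}$. $G$ is the set of Gaussian integers $(1+i)^{a_1}p_2^{a_2}\cdots p_m^{a_m}$ with integers $a_j\ge0$ and $p_j$ distinct Gaussian primes in $O^I$. *)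

From HB Require Import structures.
From mathcomp Require Import all_boot all_order all_algebra all_field.
Set Implicit Arguments. Unset Strict Implicit. Unset Printing Implicit Defensive.
Import Order.TTheory GRing.Theory Num.Theory.
Local Open Scope ring_scope.

Definition gaussInt (z : algC) : bool :=
  ('Re z \is a Num.int) && ('Im z \is a Num.int).

Definition gdvd (x y : algC) : Prop :=
  exists2 k : algC, gaussInt k & y = x * k.

Definition inU (z : algC) : bool := z \in [:: 1; -1; 'i; - 'i].

Definition gprime (p : algC) : Prop :=
  [/\ gaussInt p, p != 0, ~~ inU p &
      forall a b : algC, gaussInt a -> gaussInt b -> p = a * b -> inU a \/ inU b].

Definition gcd_unit (x y : algC) : Prop :=
  forall d : algC, gaussInt d -> gdvd d x -> gdvd d y -> inU d.

Definition gcoprime (P Q : algC) : Prop :=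
  forall p : algC, gprime p -> ~ (gdvd p P /\ gdvd p Q).

Definition inO (z : algC) : bool :=
  gaussInt z && (('Re z + 'Im z - 1) / 2%:R \is a Num.int).

Definition inOI (z : algC) : bool :=
  inO z && (('Re z - 1) / 4%:R \is a Num.int).

Definition inG (z : algC) : Prop :=
  exists (a : nat) (ps : seq algC) (es : seq nat),
    [/\ size es = size ps, uniq ps,
        (forall p, p \in ps -> gprime p /\ inOI p) &
        z = (1 + 'i) ^+ a * \prod_(j < size ps) ps`_j ^+ nth 0%N es j].

From HB Require Import structures.
From mathcomp Require Import all_boot all_order all_algebra all_field.
From mathcomp Require Import zify ring.
Import Order.TTheory GRing.Theory Num.Theory.
Local Open Scope ring_scope.
Set Implicit Arguments. Unset Strict Implicit.

(* Because X and Z lie in O^I, A = (Z - X)/2 and B = (Z + X)/2 are Gaussian integers, and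
   the equation becomes A B = -i W^2.  A prime dividing A and B divides X and Z, hence i Y^2
   and Y, so A and B are coprime.  Z[i] is Euclidean, so Euclid's lemma holds and each prime
   power of W^2 = (1+i)^(2a) p_2^(2a_2) ... p_m^(2a_m) lies entirely in A or in B.  Hence
   B = u P^2 and A = v Q^2 with P Q = W and units u v = -i; writing u = i^(t+1) forces
   v = (-1)^t i u, and X = B - A, Z = B + A become the stated formulas. *)

Definition gi (a b : int) : algC := a%:~R + 'i * b%:~R.

Lemma Re_gi a b : 'Re (gi a b) = a%:~R.
Proof. by rewrite /gi Re_rect ?Rreal_int ?intr_int. Qed.

Lemma Im_gi a b : 'Im (gi a b) = b%:~R.
Proof. by rewrite /gi Im_rect ?Rreal_int ?intr_int. Qed.

Lemma gi_inj a b c d : gi a b = gi c d -> a = c /\ b = d.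
Proof.
move=> e; have := Re_gi a b; have := Im_gi a b; rewrite e Re_gi Im_gi.
by move=> /intr_inj <- /intr_inj <-.
Qed.

Lemma gaussP z : reflect (exists a b, z = gi a b) (gaussInt z).
Proof.
apply: (iffP andP) => [[/intrP[a ea] /intrP[b eb]]|[a [b ->]]].
  by exists a, b; rewrite /gi -ea -eb -Crect.
by rewrite Re_gi Im_gi !intr_int.
Qed.

Lemma giD a b c d : gi a b + gi c d = gi (a + c) (b + d).
Proof. rewrite /gi !rmorphD /=; ring. Qed.

Lemma giN a b : - gi a b = gi (- a) (- b).
Proof. rewrite /gi !rmorphN /=; ring. Qed.

Lemma giM a b c d : gi a b * gi c d = gi (a * c - b * d) (a * d + b * c).
Proof. rewrite /gi mulC_rect !rmorphB !rmorphD !rmorphM /=; ring. Qed.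

Lemma gi0 : gi 0 0 = 0. Proof. by rewrite /gi mulr0 addr0. Qed.
Lemma gi1 : gi 1 0 = 1. Proof. by rewrite /gi mulr0 addr0. Qed.
Lemma giI : gi 0 1 = 'i. Proof. by rewrite /gi mulr1 add0r. Qed.

Lemma gaussIntD x y : gaussInt x -> gaussInt y -> gaussInt (x + y).
Proof. by move=> /gaussP[a [b ->]] /gaussP[c [d ->]]; apply/gaussP; rewrite giD; eauto. Qed.

Lemma gaussIntN x : gaussInt x -> gaussInt (- x).
Proof. by move=> /gaussP[a [b ->]]; apply/gaussP; rewrite giN; eauto. Qed.

Lemma gaussIntB x y : gaussInt x -> gaussInt y -> gaussInt (x - y).
Proof. by move=> gx gy; rewrite gaussIntD ?gaussIntN. Qed.

Lemma gaussIntM x y : gaussInt x -> gaussInt y -> gaussInt (x * y).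
Proof. by move=> /gaussP[a [b ->]] /gaussP[c [d ->]]; apply/gaussP; rewrite giM; eauto. Qed.

Lemma gaussInt0 : gaussInt 0. Proof. by apply/gaussP; rewrite -gi0; eauto. Qed.
Lemma gaussInt1 : gaussInt 1. Proof. by apply/gaussP; rewrite -gi1; eauto. Qed.
Lemma gaussInt_i : gaussInt 'i. Proof. by apply/gaussP; rewrite -giI; eauto. Qed.

Lemma gaussIntX x n : gaussInt x -> gaussInt (x ^+ n).
Proof. by move=> gx; elim: n => [|n IH]; rewrite ?gaussInt1 // exprS gaussIntM. Qed.

Lemma gaussInt_prod (I : Type) (r : seq I) (P : pred I) (F : I -> algC) :
  (forall i, P i -> gaussInt (F i)) -> gaussInt (\prod_(i <- r | P i) F i).
Proof. by move=> gF; apply: (big_ind gaussInt) => //; [exact: gaussInt1 | exact: gaussIntM]. Qed.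

Lemma sqr_norm_ge0 (a b : int) : 0 <= a ^+ 2 + b ^+ 2.
Proof. by rewrite addr_ge0 // exprn_even_ge0. Qed.

Lemma inU_cases u : inU u -> [\/ u = 1, u = -1, u = 'i | u = -'i].
Proof. by rewrite /inU !inE => /or4P[] /eqP ->; constructor. Qed.

Lemma inU_gi a b : inU (gi a b) = (a ^+ 2 + b ^+ 2 == 1).
Proof.
apply/idP/eqP => [|h].
  by case/inU_cases; rewrite -?gi1 -?giI ?giN ?oppr0 => /gi_inj[-> ->].
have : (a = 1 /\ b = 0) \/ (a = -1 /\ b = 0) \/ (a = 0 /\ b = 1) \/ (a = 0 /\ b = -1).
  by nia.
rewrite /inU !inE -gi1 -giI !giN oppr0.
by case=> [|[|[]]] [-> ->]; rewrite eqxx ?orbT.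
Qed.

Lemma inU_gaussInt u : inU u -> gaussInt u.
Proof. by case/inU_cases=> ->; rewrite ?gaussIntN ?gaussInt1 ?gaussInt_i. Qed.

Lemma inU_inv u : inU u -> exists2 v, inU v & u * v = 1.
Proof.
case/inU_cases=> ->.
- by exists 1; rewrite ?mulr1 // /inU inE eqxx.
- by exists (-1); rewrite ?mulrNN ?mulr1 // /inU !inE eqxx orbT.
- by exists (-'i); rewrite ?mulrN ?mulCii ?opprK // /inU !inE eqxx !orbT.
- by exists 'i; rewrite ?mulNr ?mulCii ?opprK // /inU !inE eqxx !orbT.
Qed.

Lemma mul_eq1_inU x y : gaussInt x -> gaussInt y -> x * y = 1 -> inU x.
Proof.
move=> /gaussP[a [b ->]] /gaussP[c [d ->]]; rewrite giM -gi1 => /gi_inj[h1 h2].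
rewrite inU_gi; apply/eqP.
have h : (a ^+ 2 + b ^+ 2) * (c ^+ 2 + d ^+ 2) = 1.
  by rewrite -[1](_ : 1 ^+ 2 + 0 ^+ 2 = 1) // -h1 -h2; ring.
have := sqr_norm_ge0 a b; have := sqr_norm_ge0 c d.
have : c ^+ 2 + d ^+ 2 != 0 by apply/eqP => e; move: h; rewrite e mulr0.
nia.
Qed.

Lemma inU_mulr x y : gaussInt x -> gaussInt y -> inU (x * y) -> inU y.
Proof.
move=> gx gy /inU_inv[v /inU_gaussInt gv e].
by apply: (@mul_eq1_inU _ (x * v)); rewrite ?gaussIntM // mulrCA mulrA.
Qed.

Lemma gdvdxx x : gdvd x x.
Proof. by exists 1; rewrite ?gaussInt1 ?mulr1. Qed.

Lemma gdvd0 x : gdvd x 0.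
Proof. by exists 0; rewrite ?gaussInt0 ?mulr0. Qed.

Lemma gdvd_trans x y z : gdvd x y -> gdvd y z -> gdvd x z.
Proof. by move=> [k gk ->] [l gl ->]; exists (k * l); rewrite ?gaussIntM ?mulrA. Qed.

Lemma gdvd_mulr x y z : gaussInt z -> gdvd x y -> gdvd x (y * z).
Proof. by move=> gz [k gk ->]; exists (k * z); rewrite ?gaussIntM ?mulrA. Qed.

Lemma gdvd_mull x y z : gaussInt z -> gdvd x y -> gdvd x (z * y).
Proof. by rewrite mulrC; apply: gdvd_mulr. Qed.

Lemma gdvdD x y z : gdvd x y -> gdvd x z -> gdvd x (y + z).
Proof. by move=> [k gk ->] [l gl ->]; exists (k + l); rewrite ?gaussIntD ?mulrDr. Qed.

Lemma gdvdB x y z : gdvd x y -> gdvd x z -> gdvd x (y - z).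
Proof. by move=> dy [l gl ->]; apply: gdvdD dy _; exists (- l); rewrite ?gaussIntN ?mulrN. Qed.

Lemma gdvd_mul2l q x y : q != 0 -> gdvd (q * x) (q * y) -> gdvd x y.
Proof. by move=> q0 [k gk e]; exists k => //; apply: (mulfI q0); rewrite e mulrA. Qed.

Lemma round_div (s N : int) : 0 < N -> exists q, (2 * (s - q * N)) ^+ 2 <= N ^+ 2.
Proof.
(* q is s / N rounded to the nearest integer. *)
move=> N0; exists ((2 * s + N) %/ (2 * N))%Z.
have N2 : 0 < 2 * N by lia.
have := divz_eq (2 * s + N) (2 * N).
have := modz_ge0 (2 * s + N) (lt0r_neq0 N2); have := ltz_pmod (2 * s + N) N2.
move: ((2 * s + N) %/ (2 * N))%Z ((2 * s + N) %% (2 * N))%Z => q r lt_r ge0_r e.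
have -> : 2 * (s - q * N) = r - N by rewrite mulrBr; lia.
by rewrite !expr2; nia.
Qed.

Lemma gi_div_rem a b c d : 0 < c ^+ 2 + d ^+ 2 -> exists q1 q2 e f,
  gi a b = gi q1 q2 * gi c d + gi e f /\ e ^+ 2 + f ^+ 2 < c ^+ 2 + d ^+ 2.
Proof.
set N := c ^+ 2 + d ^+ 2 => N0.
(* q1 + q2 i is a nearest Gaussian integer to (a + b i) / (c + d i) = (a + b i)(c - d i) / N. *)
have [q1 h1] := round_div (a * c + b * d) N0.
have [q2 h2] := round_div (b * c - a * d) N0.
exists q1, q2, (a - (q1 * c - q2 * d)), (b - (q1 * d + q2 * c)); split.
  by rewrite giM giD; congr gi; ring.
set E := _ + _.
have eEN : E * N = (a * c + b * d - q1 * N) ^+ 2 + (b * c - a * d - q2 * N) ^+ 2.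
  by rewrite /E /N; ring.
have E0 : 0 <= E by apply: sqr_norm_ge0.
move: h1 h2 eEN; rewrite !exprMn.
move: (a * c + b * d - q1 * N) (b * c - a * d - q2 * N) => A B h1 h2 eEN.
clearbody E N; rewrite !expr2 in h1 h2 eEN.
have h3 : 2 * (E * N) <= N * N by lia.
clear -h3 E0 N0; nia.
Qed.

Lemma gauss_bezout x y : gaussInt x -> gaussInt y -> exists g,
  [/\ gaussInt g, gdvd g x, gdvd g y &
      exists u v, [/\ gaussInt u, gaussInt v & g = u * x + v * y]].
Proof.
move=> gx /gaussP[c [d ->]].
suff IH n : forall a b : int, a ^+ 2 + b ^+ 2 < n%:Z -> forall x, gaussInt x -> exists g,
    [/\ gaussInt g, gdvd g x, gdvd g (gi a b) &
        exists u v, [/\ gaussInt u, gaussInt v & g = u * x + v * gi a b]].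
  by apply: (IH (absz (c ^+ 2 + d ^+ 2)).+1) => //; have := sqr_norm_ge0 c d; lia.
clear; elim: n => [|n IH] c d lt_n x gx; first by have := sqr_norm_ge0 c d; lia.
have [N0|N0] := eqVneq (c ^+ 2 + d ^+ 2) 0.
  have [-> ->] : c = 0 /\ d = 0 by nia.
  exists x; rewrite gi0; split; [exact: gx | exact: gdvdxx | exact: gdvd0 |].
  by exists 1, 0; rewrite gaussInt1 gaussInt0 mul1r mulr0 addr0.
have /gaussP[a [b ex]] := gx.
have [|q1 [q2 [e [f [exq lt_r]]]]] := @gi_div_rem a b c d.
  by have := sqr_norm_ge0 c d; rewrite le_eqVlt eq_sym (negbTE N0).
have gy : gaussInt (gi c d) by apply/gaussP; eauto.
have gq : gaussInt (gi q1 q2) by apply/gaussP; eauto.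
have [|g [gg dgy dgr [u [v [gu gv eg]]]]] := IH e f _ (gi c d) gy; first lia.
exists g; split => //.
  by rewrite ex exq; apply: gdvdD dgr; apply: gdvd_mull.
exists v, (u - v * gi q1 q2); split; rewrite ?gaussIntB ?gaussIntM //.
by rewrite eg ex exq; ring.
Qed.

Lemma gprime_dvdM p x y : gprime p -> gaussInt x -> gaussInt y ->
  gdvd p (x * y) -> gdvd p x \/ gdvd p y.
Proof.
move=> [gp _ _ irr_p] gx gy dpxy.
have [g [gg [k gk ep] dgx [u [v [gu gv eg]]]]] := gauss_bezout gp gx.
case: (irr_p g k gg gk ep) => /inU_inv.
- move=> [g' /inU_gaussInt gg' eg']; right.
  have -> : y = g' * (u * (p * y) + v * (x * y)).
    by rewrite !mulrA -mulrDl -eg mulrA [g' * g]mulrC eg' mul1r.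
  apply: gdvd_mull => //; apply: gdvdD; apply: gdvd_mull => //.
  exact: gdvd_mulr gy (gdvdxx p).
- move=> [k' /inU_gaussInt gk' ek']; left; apply: gdvd_trans dgx.
  by exists k' => //; rewrite ep -mulrA ek' mulr1.
Qed.

Lemma gprime_gaussInt p : gprime p -> gaussInt p. Proof. by case. Qed.
Lemma gprime_neq0 p : gprime p -> p != 0. Proof. by case. Qed.

Lemma gprime_ndvd_inU p u : gprime p -> inU u -> ~ gdvd p u.
Proof.
move=> [gp _ /negP nup _] /inU_inv[v /inU_gaussInt gv euv] [k gk eu].
by apply: nup; apply: (@mul_eq1_inU _ (k * v)); rewrite ?gaussIntM // mulrA -eu.
Qed.

Lemma gprimeX_dvdr q x y n : gprime q -> gaussInt x -> gaussInt y -> ~ gdvd q x ->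
  gdvd (q ^+ n) (x * y) -> gdvd (q ^+ n) y.
Proof.
move=> pq gx; elim: n y => [|n IH] y gy nqx.
  by rewrite expr0; exists y; rewrite ?mul1r.
move=> dxy; have dq : gdvd q (x * y).
  apply: gdvd_trans dxy; rewrite exprS.
  by apply: gdvd_mulr (gdvdxx q); apply/gaussIntX/gprime_gaussInt.
case: (gprime_dvdM pq gx gy dq) => // -[y' gy' ey].
have [|z gz ey'] := IH y' gy' nqx.
  by apply: (@gdvd_mul2l q); [exact: gprime_neq0 | rewrite -exprS mulrCA -ey].
by exists z; rewrite // ey ey' exprS mulrA.
Qed.

Lemma gcoprimeC x y : gcoprime x y -> gcoprime y x.
Proof. by move=> cxy p pp [dy dx]; apply: (cxy p pp). Qed.

Lemma gcoprime_dvd x y x' y' : gdvd x' x -> gdvd y' y -> gcoprime x y -> gcoprime x' y'.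
Proof.
move=> dx dy cxy p pp [dx' dy']; apply: (cxy p pp).
by split; [apply: gdvd_trans dx | apply: gdvd_trans dy].
Qed.

Lemma gcoprime_prime_pow_dvd q k x y c r :
  gprime q -> gaussInt x -> gaussInt y -> gaussInt r -> inU c ->
  gcoprime x y -> gdvd q y -> x * y = c * (q ^+ k * r) ->
  exists2 y', gaussInt y' & y = q ^+ k * y' /\ x * y' = c * r.
Proof.
move=> pq gx gy gr /inU_gaussInt gc cxy dqy exy.
have ndqx : ~ gdvd q x by move=> dqx; apply: (cxy q pq).
have [|y' gy' ey] := @gprimeX_dvdr q x y k pq gx gy ndqx.
  by rewrite exy mulrCA; apply: gdvd_mulr (gdvdxx _); rewrite gaussIntM.
exists y' => //; split => //.
apply: (mulfI (expf_neq0 k (gprime_neq0 pq))).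
by rewrite mulrCA -ey exy mulrCA.
Qed.

Lemma gcoprime_split_prime_pow q k x y c r :
  gprime q -> gaussInt x -> gaussInt y -> gaussInt r -> inU c ->
  gcoprime x y -> x * y = c * (q ^+ (2 * k) * r) ->
  exists (b : bool) x' y', [/\ gaussInt x', gaussInt y', gcoprime x' y',
    x' * y' = c * r & y = q ^+ (if b then k else 0%N) ^+ 2 * y'].
Proof.
move=> pq gx gy gr uc cxy; case: k => [|k] exy.
  exists false, x, y; split; rewrite ?expr1n ?mul1r //.
  by rewrite exy muln0 expr0 mul1r.
have dqxy : gdvd q (x * y).
  rewrite exy mulrCA; apply: gdvd_mulr; first exact: gaussIntM (inU_gaussInt uc) gr.
  by rewrite mulnS exprS; apply: gdvd_mulr (gdvdxx q); apply/gaussIntX/gprime_gaussInt.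
case: (gprime_dvdM pq gx gy dqxy) => [dqx | dqy].
- have eyx : y * x = c * (q ^+ (2 * k.+1) * r) by rewrite mulrC.
  have [x' gx' [ex exy']] := gcoprime_prime_pow_dvd pq gy gx gr uc (gcoprimeC cxy) dqx eyx.
  exists false, x', y; split; rewrite ?expr0 ?expr1n ?mul1r // 1?mulrC //.
  apply: gcoprime_dvd (gdvdxx y) cxy.
  by rewrite ex; apply: gdvd_mull (gdvdxx _); apply/gaussIntX/gprime_gaussInt.
- have [y' gy' [ey exy']] := gcoprime_prime_pow_dvd pq gx gy gr uc cxy dqy exy.
  exists true, x, y'; split => //; last by rewrite -exprM mulnC.
  apply: gcoprime_dvd (gdvdxx x) _ cxy.
  by rewrite ey; apply: gdvd_mull (gdvdxx _); apply/gaussIntX/gprime_gaussInt.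
Qed.

Lemma gcoprime_split_prod (I : eqType) (r : seq I) (p : I -> algC) (e : I -> nat) x y c :
  uniq r -> (forall j, j \in r -> gprime (p j)) -> gaussInt x -> gaussInt y -> inU c ->
  gcoprime x y -> x * y = c * \prod_(j <- r) p j ^+ (2 * e j) ->
  exists (m : pred I) u, inU u /\ y = u * (\prod_(j <- r | m j) p j ^+ e j) ^+ 2.
Proof.
elim: r x y => [|h r IH] x y /= ur pr gx gy uc cxy exy.
  exists predT, y; rewrite big_nil expr1n mulr1; split => //.
  by apply: (inU_mulr gx gy); rewrite exy big_nil mulr1.
case/andP: ur => hr ur.
have pr' j : j \in r -> gprime (p j) by move=> jr; apply: pr; rewrite inE jr orbT.
have gR : gaussInt (\prod_(j <- r) p j ^+ (2 * e j)).
  by rewrite big_seq; apply: gaussInt_prod => j /pr' /gprime_gaussInt /gaussIntX.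
rewrite big_cons in exy.
have [|b [x' [y' [gx' gy' cxy' exy' ey]]]] := gcoprime_split_prime_pow _ gx gy gR uc cxy exy.
  by apply: pr; rewrite inE eqxx.
have [m [u [uu ey']]] := IH x' y' ur pr' gx' gy' uc cxy' exy'.
have eqm : \prod_(j <- r | if j == h then b else m j) p j ^+ e j
          = \prod_(j <- r | m j) p j ^+ e j.
  rewrite big_seq_cond [RHS]big_seq_cond; apply: eq_bigl => j.
  by case: (eqVneq j h) => [->|]; rewrite ?(negbTE hr).
exists (fun j => if j == h then b else m j), u; split => //.
by rewrite big_cons /= eqxx eqm ey ey'; case: b {ey eqm}; rewrite ?expr0 ?expr1n ?mul1r; ring.
Qed.

Lemma gprime_1i : gprime (1 + 'i).
Proof.
have -> : 1 + 'i = gi 1 1 by rewrite /gi mulr1.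
split; [by apply/gaussP; exists 1, 1 | by rewrite -gi0; apply/eqP => /gi_inj[] |
        by rewrite inU_gi |].
move=> x y /gaussP[a [b ->]] /gaussP[c [d ->]]; rewrite giM => /gi_inj[h1 h2].
have : (a ^+ 2 + b ^+ 2) * (c ^+ 2 + d ^+ 2) = 2.
  by rewrite -[2](_ : 1 ^+ 2 + 1 ^+ 2 = 2) // {1}h1 h2; ring.
have := sqr_norm_ge0 a b; have := sqr_norm_ge0 c d; rewrite !inU_gi.
move: (a ^+ 2 + b ^+ 2) (c ^+ 2 + d ^+ 2) => n1 n2 n2_ge0 n1_ge0 n12.
have [->|->] : n1 = 1 \/ n2 = 1 by nia.
  by left.
by right.
Qed.

Lemma inG_mask a (ps : seq algC) (es : seq nat) (m : pred nat) :
  uniq ps -> (forall p, p \in ps -> gprime p /\ inOI p) ->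
  inG ((1 + 'i) ^+ a * \prod_(j < size ps | m j) ps`_j ^+ nth 0%N es j).
Proof.
move=> ups hps; exists a, ps, (mkseq (fun j => if m j then nth 0%N es j else 0%N) (size ps)).
split; rewrite ?size_mkseq //; congr (_ * _).
by rewrite big_mkcond; apply: eq_bigr => j _; rewrite nth_mkseq //; case: (m j).
Qed.

Lemma gcoprime_mul_sq_inG_r x y c w :
  gaussInt x -> gaussInt y -> inU c -> gcoprime x y -> inG w -> x * y = c * w ^+ 2 ->
  exists P Q u, [/\ inG P, inG Q, inU u, P * Q = w & y = u * P ^+ 2].
Proof.
move=> gx gy uc cxy [a [ps [es [_ ups hps ->]]]].
set n := size ps.
have prime_ps j : j \in index_iota 0 n -> gprime ps`_j.
  by rewrite mem_index_iota => /andP[_ /(mem_nth 0) /hps[]].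
have eR2 : (\prod_(j < n) ps`_j ^+ nth 0%N es j) ^+ 2
            = \prod_(0 <= j < n) ps`_j ^+ (2 * nth 0%N es j).
  by rewrite big_mkord -prodrXl; apply: eq_bigr => j _; rewrite -exprM mulnC.
have gR2 : gaussInt ((\prod_(j < n) ps`_j ^+ nth 0%N es j) ^+ 2).
  by rewrite eR2 big_seq; apply: gaussInt_prod => j /prime_ps /gprime_gaussInt /gaussIntX.
rewrite exprMn -exprM mulnC => exy.
have [b [x' [y' [gx' gy' cxy' exy' ey]]]] :=
  gcoprime_split_prime_pow gprime_1i gx gy gR2 uc cxy exy.
rewrite eR2 in exy'.
have uniq_iota : uniq (index_iota 0 n) by exact: iota_uniq.
have [m [u [uu ey']]] := gcoprime_split_prod uniq_iota prime_ps gx' gy' uc cxy' exy'.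
rewrite big_mkord in ey'.
exists ((1 + 'i) ^+ (if b then a else 0%N) * \prod_(j < n | m j) ps`_j ^+ nth 0%N es j).
exists ((1 + 'i) ^+ (if b then 0%N else a) * \prod_(j < n | ~~ m j) ps`_j ^+ nth 0%N es j), u.
split; [exact: (inG_mask _ es m ups hps) | exact: (inG_mask _ es (predC m) ups hps) | done | |].
  by rewrite mulrACA -exprD [in RHS](bigID (fun j : 'I_n => m j)) /=; case: b {ey}; rewrite ?addn0.
by rewrite ey ey' exprMn mulrCA.
Qed.

Lemma inG_gaussInt z : inG z -> gaussInt z.
Proof.
move=> [a [ps [es [_ _ hps ->]]]].
apply: gaussIntM; first by apply/gaussIntX/gaussIntD; [exact: gaussInt1 | exact: gaussInt_i].
apply: gaussInt_prod => j _; apply/gaussIntX/gprime_gaussInt.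
exact: (hps _ (mem_nth 0 (ltn_ord j))).1.
Qed.

Lemma gcoprime_mul_sq_inG x y c w :
  gaussInt x -> gaussInt y -> inU c -> gcoprime x y -> inG w -> w != 0 ->
  x * y = c * w ^+ 2 ->
  exists P Q u v, [/\ inG P, inG Q, gcoprime P Q, P * Q = w &
                      [/\ inU u, u * v = c, x = v * Q ^+ 2 & y = u * P ^+ 2]].
Proof.
move=> gx gy uc cxy gw w0 exy.
have [P [Q [u [GP GQ uu ePQ ey]]]] := gcoprime_mul_sq_inG_r gx gy uc cxy gw exy.
have [u' /inU_gaussInt gu' uu'] := inU_inv uu.
have P0 : P != 0 by apply: contraNneq w0 => P0; rewrite -ePQ P0 mul0r.
have exu : x * u = c * Q ^+ 2.
  by apply: (mulIf (expf_neq0 2 P0)); rewrite -mulrA -ey exy -ePQ; ring.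
have ex : x = c * u' * Q ^+ 2 by rewrite -[x]mulr1 -uu' mulrA exu; ring.
exists P, Q, u, (c * u'); split => //; last by split => //; rewrite mulrCA uu' mulr1.
have [gP gQ] := (inG_gaussInt GP, inG_gaussInt GQ).
apply: gcoprime_dvd (gcoprimeC cxy).
- rewrite ey expr2 mulrA; apply: gdvd_mull (gdvdxx P).
  exact: gaussIntM (inU_gaussInt uu) gP.
- rewrite ex expr2 mulrA; apply: gdvd_mull (gdvdxx Q).
  exact: gaussIntM (gaussIntM (inU_gaussInt uc) gu') gQ.
Qed.

Lemma intr_div_nat (x : int) (n : nat) : (0 < n)%N ->
  (x%:~R : algC) / n%:R \is a Num.int -> exists k : int, x = k * n%:Z.
Proof.
move=> n_gt0 /intrP[k ek]; exists k; apply: (@intr_inj algC).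
by rewrite rmorphM /= -ek divfK ?pnatr_eq0 -?lt0n // -pmulrn.
Qed.

Lemma inOI_gi z : inOI z -> exists k l, z = gi (4 * k + 1) (2 * l).
Proof.
move=> /andP[/andP[/gaussP[a [b ->]] h2] h4]; rewrite Re_gi Im_gi in h2 h4.
have [k ek] : exists k : int, a - 1 = k * 4%:Z by apply: intr_div_nat; rewrite ?rmorphB.
have [m em] : exists m : int, a + b - 1 = m * 2%:Z.
  by apply: intr_div_nat; rewrite ?rmorphB ?rmorphD.
by exists k, (m - 2 * k); congr gi; lia.
Qed.

Lemma inOI_sum_diff X Z : inOI X -> inOI Z ->
  exists A B, [/\ gaussInt A, gaussInt B, X = B - A & Z = A + B].
Proof.
move=> /inOI_gi[k [l ->]] /inOI_gi[k' [l' ->]].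
exists (gi (2 * (k' - k)) (l' - l)), (gi (2 * (k + k') + 1) (l + l')).
split; try by apply/gaussP; do 2 eexists.
  by rewrite giN giD; congr gi; lia.
by rewrite giD; congr gi; lia.
Qed.

Lemma gcoprime_sum_diff X Y Z A B : gaussInt X -> gaussInt Y -> gaussInt Z ->
  X ^+ 2 + 'i * Y ^+ 2 = Z ^+ 2 -> gcd_unit X Y -> X = B - A -> Z = A + B -> gcoprime A B.
Proof.
move=> gX gY gZ eXYZ cXY eX eZ p pp [dA dB].
have dX : gdvd p X by rewrite eX; apply: gdvdB.
have dZ : gdvd p Z by rewrite eZ; apply: gdvdD.
have dY2 : gdvd p ('i * (Y * Y)).
  rewrite (_ : 'i * (Y * Y) = Z * Z - X * X); last by rewrite -!expr2 -eXYZ; ring.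
  by apply: gdvdB; apply: gdvd_mulr.
have dY : gdvd p Y.
  have [/(gprime_ndvd_inU pp)[] | dYY] := gprime_dvdM pp gaussInt_i (gaussIntM gY gY) dY2.
    by rewrite /inU !inE eqxx !orbT.
  by case: (gprime_dvdM pp gY gY dYY).
by case: pp => gp _ /negP[]; apply: cXY.
Qed.

Lemma inU_ipow_cofactor u v : inU u -> u * v = - 'i ->
  exists2 t, (t <= 3)%N & u = 'i ^+ t.+1 /\ v = u * (-1) ^+ t * 'i.
Proof.
move=> uu euv; have [t t_le3 eu] : exists2 t, (t <= 3)%N & u = 'i ^+ t.+1.
  have i4 : 'i ^+ 4 = 1 :> algC by rewrite (exprM _ 2 2) sqrCi sqrrN !expr1n.
  case/inU_cases: uu => ->; [exists 3%N | exists 1%N | exists 0%N | exists 2%N] => //.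
  - by rewrite sqrCi.
  - by rewrite exprS sqrCi mulrN1.
exists t => //; split => //.
have sign : u ^+ 2 * (-1) ^+ t = -1.
  by rewrite eu exprAC sqrCi -exprD addSn addnn exprS -mul2n exprM sqrrN !expr1n mulr1.
have -> : v = - (u ^+ 2 * (-1) ^+ t) * v by rewrite sign opprK mul1r.
have -> : - (u ^+ 2 * (-1) ^+ t) * v = - (u * v) * (u * (-1) ^+ t) by ring.
by rewrite euv; ring.
Qed.

Theorem theorem4p11 (X Y Z : algC) :
  gaussInt X -> gaussInt Y -> gaussInt Z ->
  X ^+ 2 + 'i * Y ^+ 2 = Z ^+ 2 ->
  gcd_unit X Y ->
  X * Y * Z != 0 ->
  inOI X -> inOI Z ->
  (exists2 W : algC, inG W & Y = (1 + 'i) ^+ 2 * W) ->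
  exists (t : nat) (P Q : algC),
    [/\ (t <= 3)%N, inG P, inG Q, gcoprime P Q &
        [/\         X = 'i ^+ t.+1 * (P ^+ 2 - (-1) ^+ t * 'i * Q ^+ 2),
        Y = (1 + 'i) ^+ 2 * P * Q &
        Z = 'i ^+ t.+1 * (P ^+ 2 + (-1) ^+ t * 'i * Q ^+ 2)]].
Proof.
move=> gX gY gZ eXYZ cXY nz oX oZ [W gW eY].
have [A [B [gA gB eX eZ]]] := inOI_sum_diff oX oZ.
have cAB := gcoprime_sum_diff gX gY gZ eXYZ cXY eX eZ.
have eAB : A * B = - 'i * W ^+ 2.
  have i1_sqr : (1 + 'i) ^+ 2 = 2 * 'i :> algC by rewrite addrC sqrrD1 sqrCi; ring.
  apply: (@mulIf _ 4); first by rewrite pnatr_eq0.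
  have -> : A * B * 4 = Z ^+ 2 - X ^+ 2 by rewrite eX eZ; ring.
  by rewrite -eXYZ eY i1_sqr !exprMn sqrCi; ring.
have W0 : W != 0 by apply: contraNneq nz => W0; rewrite eY W0 !mulr0 mul0r.
have uNi : inU (- 'i) by rewrite /inU !inE eqxx !orbT.
have [P [Q [u [v [GP GQ cPQ ePQ [uu euv eA eB]]]]]] :=
  gcoprime_mul_sq_inG gA gB uNi cAB gW W0 eAB.
have [t t_le3 [eu ev]] := inU_ipow_cofactor uu euv.
exists t, P, Q; split => //; rewrite -eu.
split; first by rewrite eX eA eB ev; ring.
  by rewrite eY -ePQ mulrA.
by rewrite eZ eA eB ev; ring.
Qed.
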